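(* Let $q$ be a power of an odd prime, $d\geq 2$, let $A\subset\mathbb F_q$ be nonempty, let $E=A\times A\times\cdots\times A\subset\mathbb F_q^d$ ($d$ factors), and let $F\subset\mathbb F_q^d$ be nonempty. Then $$|\Delta(E,F)|\geq \min\left\{\frac{q}{2},\ \frac{|E|^{1-\frac1d}|F|}{4q^{d-1}}\right\}.$$
   Context: $\mathbb F_q$ is the finite field with $q$ elements, of characteristic greater than two. For $m=(m_1,\dots,m_d)\in\mathbb F_q^d$ put $\|m\|=m_1^2+\dots+m_d^2\in\mathbb F_q$. For $E,F\subset\mathbb F_q^d$ the distance set is $\Delta(E,F)=\{\|x-y\|\in\mathbb F_q: x\in E,\ y\in F\}$. *)

From HB Require Import structures.
From mathcomp Require Import all_boot all_order all_algebra all_field.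
Set Implicit Arguments. Unset Strict Implicit. Unset Printing Implicit Defensive.
Import Order.TTheory GRing.Theory Num.Theory.
Local Open Scope ring_scope.

Definition sqnorm (K : fieldType) (d : nat) (m : 'rV[K]_d) : K :=
  \sum_(i < d) (m 0 i) ^+ 2.

Definition distset (K : finFieldType) (d : nat) (E F : {set 'rV[K]_d}) : {set K} :=
  [set sqnorm (x - y) | x in E, y in F].

Definition prodset (K : finFieldType) (d : nat) (A : {set K}) : {set 'rV[K]_d} :=
  [set x : 'rV[K]_d | [forall i, x 0 i \in A]].

From HB Require Import structures.
From mathcomp Require Import all_boot all_order all_algebra all_field all_fingroup all_character.
From mathcomp Require Import ring.
Set Implicit Arguments. Unset Strict Implicit. Unset Printing Implicit Defensive.
Import Order.TTheory GRing.Theory Num.Theory.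
Local Open Scope ring_scope.

(* Let nu(t) be the number of pairs (x, y) in E x F with ||x - y|| = t and
   N = sum_t nu(t)^2.  Cauchy-Schwarz over the distance set gives
   (|E||F|)^2 <= |Delta(E, F)| N.  The upper bound on N is Fourier-analytic,
   using a nontrivial additive character chi of F_q (obtained from the
   character theory of the additive group):
   - the transform of nu on F_q is W(s) = sum_(x in E, y in F) chi(s ||x - y||),
     so by Plancherel q N = sum_s |W(s)|^2, and W(0) = |E||F|;
   - for s != 0, a Gauss sum computation expresses W(s) through the
     correlations sum_(||m|| = k) hat E(m) conj(hat F(m)) of the Fourier
     transforms of E and F on the spheres ||m|| = k; Plancherel on F_q and
     Cauchy-Schwarz on each sphere bound sum_(s != 0) |W(s)|^2 by B |F|,
     whenever q times the Fourier mass of E on every sphere is at most B;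
   - for E = A^d, the transform of E factors along one axis and lines in that
     direction meet a sphere at most twice, which gives B = 2 |A| |E| q^d.
   The theorem follows from q N <= (|E||F|)^2 + 2 |A| q^d |E||F| by a short
   case distinction. *)

Section Orthogonality.
Variables (I T : finType) (e : I -> T -> algC) (c : algC).
Hypothesis e_orth : forall x y, \sum_i e i x * (e i y)^* = (x == y)%:R * c.

Definition transform (g : T -> algC) (i : I) : algC := \sum_x e i x * g x.

Lemma plancherel (g : T -> algC) :
  \sum_i `|transform g i| ^+ 2 = c * \sum_x `|g x| ^+ 2.
Proof.
have expand i : `|transform g i| ^+ 2 =
    \sum_x \sum_y g x * (g y)^* * (e i x * (e i y)^*).
  rewrite normCK rmorph_sum mulr_suml; apply: eq_bigr => x _.
  by rewrite mulr_sumr; apply: eq_bigr => y _; rewrite rmorphM /=; ring.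
under eq_bigr do rewrite expand.
rewrite exchange_big mulr_sumr; apply: eq_bigr => x _ /=.
rewrite exchange_big /= (bigD1 x) //= [X in _ + X]big1 ?addr0; last first.
  by move=> y /negbTE yx; rewrite -mulr_sumr e_orth eq_sym yx mul0r !mulr0.
by rewrite -mulr_sumr e_orth eqxx mul1r normCK; ring.
Qed.

Lemma inversion (g : T -> algC) w :
  \sum_i (\sum_z g z * (e i z)^*) * e i w = c * g w.
Proof.
under eq_bigr do rewrite mulr_suml.
under eq_bigr do under eq_bigr do rewrite -mulrA (mulrC (_^*)).
rewrite exchange_big /= (bigD1 w) //= [X in _ + X]big1 ?addr0; last first.
  by move=> z /negbTE zw; rewrite -mulr_sumr e_orth eq_sym zw mul0r mulr0.
by rewrite -mulr_sumr e_orth eqxx mul1r mulrC.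
Qed.

End Orthogonality.

(* Cauchy-Schwarz for finite sums of real numbers, from the Lagrange identity
   sum_(t,u) (f t g u - f u g t)^2 = 2 (sum f^2 sum g^2 - (sum f g)^2). *)
Lemma cauchy_schwarz (R : numDomainType) (T : finType) (P : pred T) (f g : T -> R) :
  (forall t, f t \is Num.real) -> (forall t, g t \is Num.real) ->
  (\sum_(t | P t) f t * g t) ^+ 2 <=
  (\sum_(t | P t) f t ^+ 2) * \sum_(t | P t) g t ^+ 2.
Proof.
move=> f_real g_real.
have lagrange : \sum_(t | P t) \sum_(u | P u) (f t * g u - f u * g t) ^+ 2 =
    ((\sum_(t | P t) f t ^+ 2) * (\sum_(t | P t) g t ^+ 2)
     - (\sum_(t | P t) f t * g t) ^+ 2) *+ 2.
  set Sf := \sum_(t | P t) f t ^+ 2; set Sg := \sum_(t | P t) g t ^+ 2.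
  set Sfg := \sum_(t | P t) f t * g t.
  have inner t : \sum_(u | P u) (f t * g u - f u * g t) ^+ 2 =
      f t ^+ 2 * Sg + g t ^+ 2 * Sf - (f t * g t * Sfg) *+ 2.
    rewrite /Sf /Sg /Sfg !mulr_sumr -sumrMnl -big_split -sumrB /=.
    by apply: eq_bigr => u _; rewrite mulr2n; ring.
  under eq_bigr do rewrite inner.
  rewrite sumrB big_split /= sumrMnl -!mulr_suml -/Sf -/Sg.
  by rewrite -/Sfg !mulr2n expr2; ring.
have : 0 <= \sum_(t | P t) \sum_(u | P u) (f t * g u - f u * g t) ^+ 2.
  apply: sumr_ge0 => t _; apply: sumr_ge0 => u _.
  by apply: real_exprn_even_ge0; rewrite // rpredB // rpredM.
by rewrite lagrange pmulrn_lge0 // subr_ge0.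
Qed.

Lemma cauchy_schwarz_count (R : numDomainType) (T : finType) (P : {pred T}) (f : T -> R) :
  (forall t, f t \is Num.real) ->
  (\sum_(t in P) f t) ^+ 2 <= #|P|%:R * \sum_(t in P) f t ^+ 2.
Proof.
move=> f_real.
have := @cauchy_schwarz R T (mem P) f (fun=> 1) f_real (fun=> real1 R).
under eq_bigr do rewrite mulr1.
by rewrite expr1n sumr_const mulr_natr mulr_natl.
Qed.

Section DistanceCount.
Variables (K : finFieldType) (d : nat) (E F : {set 'rV[K]_d}).

Definition dist_count (t : K) : nat :=
  #|[set p in setX E F | sqnorm (p.1 - p.2) == t]|.

Lemma sum_dist_count : (\sum_t dist_count t = #|E| * #|F|)%N.
Proof.
rewrite -cardsX -sum1_card (partition_big (fun p => sqnorm (p.1 - p.2)) predT) //=.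
by apply: eq_bigr => t _; rewrite /dist_count -sum1_card; apply: eq_bigl => p; rewrite !inE.
Qed.

Lemma dist_count_out t : t \notin distset E F -> dist_count t = 0%N.
Proof.
move=> t_notin; apply/eqP; rewrite cards_eq0; apply/eqP/setP => -[x y].
rewrite !inE /=; apply/negP => /andP[/andP[xE yF] /eqP xy_t].
by move: t_notin; rewrite -xy_t; apply/negP/negPn/imset2_f.
Qed.

(* Cauchy-Schwarz over the distance set: the |E||F| pairs are spread over
   |Delta(E, F)| values, so (|E||F|)^2 <= |Delta(E, F)| sum_t nu(t)^2. *)
Lemma dist_count_lower :
  ((#|E| * #|F|) ^ 2 <= #|distset E F| * \sum_t dist_count t ^ 2)%N.
Proof.
have restrict (f : nat -> nat) : f 0%N = 0%N ->
    (\sum_(t in distset E F) f (dist_count t) = \sum_t f (dist_count t))%N.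
  move=> f0; rewrite [RHS](bigID (mem (distset E F))) /= [X in (_ + X)%N]big1 ?addn0 //.
  by move=> t /dist_count_out ->.
rewrite -sum_dist_count -(restrict id) // -(restrict (fun n => n ^ 2)%N) //.
rewrite -(ler_nat algC) natrM !natrX !natr_sum.
under [X in _ <= _ * X]eq_bigr do rewrite natrX.
exact: cauchy_schwarz_count (fun t => @realn algC (dist_count t)).
Qed.

End DistanceCount.

(* A nontrivial additive character of a finite field, taken among the linear
   characters of its (abelian) additive group. *)
Lemma nontrivial_additive_character (K : finFieldType) :
  exists chi : K -> algC, [/\ forall x y, chi (x + y) = chi x * chi y,
     forall x, chi (- x) = (chi x)^*, chi 0 = 1 & exists t, chi t != 1].
Proof.
pose G := [set: FinRing.Field_to_finGroup K].
have abG : abelian G by apply: FinRing.zmod_abelian.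
have NirrG : Nirr G = #|K|.
  by rewrite NirrE; move: abG; rewrite card_classes_abelian => /eqP ->; rewrite cardsT.
have n1 : (1 < Nirr G)%N by rewrite NirrG; exact: finNzRing_gt1.
pose i : Iirr G := Ordinal n1.
have linG := char_abelianP G abG.
exists (fun x => 'chi_i x); split.
- by move=> x y; rewrite -(lin_charM (linG i)) ?inE.
- by move=> x; rewrite -(lin_charV_conj (linG i)) ?inE.
- exact: (lin_char1 (linG i)).
- apply/existsP; rewrite -negb_forall; apply/negP => /forallP chi_triv.
  have : 'chi_i = 'chi_0.
    rewrite irr0; apply/cfun_inP => x _; rewrite cfun1E inE.
    exact/eqP/chi_triv.
  by move/irr_inj/(congr1 val).
Qed.

Section AdditiveCharacter.
Variables (K : finFieldType) (chi : K -> algC).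
Hypothesis chiD : forall x y, chi (x + y) = chi x * chi y.
Hypothesis chiN : forall x, chi (- x) = (chi x)^*.
Hypothesis chi0 : chi 0 = 1.
Variable t0 : K.
Hypothesis chi_t0 : chi t0 != 1.

Local Notation q := #|K|.

Lemma q_gt0 : (0 < q)%N.
Proof. by apply/card_gt0P; exists 0. Qed.

Lemma charB a b : chi a * (chi b)^* = chi (a - b).
Proof. by rewrite -chiN -chiD. Qed.

Lemma norm_char x : `|chi x| = 1.
Proof.
by apply/eqP; rewrite -sqrp_eq1 ?normr_ge0 // normCK charB subrr chi0.
Qed.

(* A character sum which a bijection h of the index set shifts by t0
   is multiplied by chi t0 != 1, hence vanishes. *)
Lemma shifted_char_sum (T : finType) (f : T -> K) (h : T -> T) :
  injective h -> (forall x, f (h x) = f x + t0) -> \sum_x chi (f x) = 0.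
Proof.
move=> h_inj hf.
have fixed : \sum_x chi (f x) = (\sum_x chi (f x)) * chi t0.
  rewrite {1}(reindex_inj h_inj) /= mulr_suml; apply: eq_bigr => x _.
  by rewrite hf chiD.
have : (\sum_x chi (f x)) * (1 - chi t0) = 0 by rewrite mulrBr mulr1 -fixed subrr.
by move/eqP; rewrite mulf_eq0 subr_eq0 [1 == _]eq_sym (negbTE chi_t0) orbF => /eqP.
Qed.

Lemma char_sum c : \sum_u chi (c * u) = (c == 0)%:R * q%:R.
Proof.
have [->|c_neq0] := eqVneq c 0.
  under eq_bigr do rewrite mul0r chi0.
  by rewrite sumr_const cardT mul1r.
rewrite mul0r; apply: (@shifted_char_sum _ (fun u => c * u) (+%R^~ (t0 / c))).
  exact: addIr.
by move=> x /=; rewrite mulrDr mulrCA divff // mulr1.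
Qed.

Lemma char_orthK x y :
  \sum_s chi (s * x) * (chi (s * y))^* = (x == y)%:R * q%:R.
Proof.
under eq_bigr do rewrite charB -mulrBr mulrC.
by rewrite char_sum subr_eq0.
Qed.

Variable d : nat.
Local Notation V := 'rV[K]_d.

Lemma q_pow_neq0 : (q ^ d)%:R != 0 :> algC.
Proof. by rewrite pnatr_eq0 -lt0n expn_gt0 q_gt0. Qed.


Definition dot (m v : V) : K := \sum_i m 0 i * v 0 i.

Lemma dotC m v : dot m v = dot v m.
Proof. by apply: eq_bigr => i _; rewrite mulrC. Qed.

Lemma dotDl m m' v : dot (m + m') v = dot m v + dot m' v.
Proof. by rewrite /dot -big_split; apply: eq_bigr => i _; rewrite mxE mulrDl. Qed.

Lemma dotZl c m v : dot (c *: m) v = c * dot m v.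
Proof. by rewrite /dot mulr_sumr; apply: eq_bigr => i _; rewrite mxE mulrA. Qed.

Lemma dotDr m v v' : dot m (v + v') = dot m v + dot m v'.
Proof. by rewrite !(dotC m) dotDl. Qed.

Lemma dotZr c m v : dot m (c *: v) = c * dot m v.
Proof. by rewrite !(dotC m) dotZl. Qed.

Lemma dotBr m v v' : dot m (v - v') = dot m v - dot m v'.
Proof. by rewrite -scaleN1r dotDr dotZr mulN1r. Qed.

Lemma dot_delta i v : dot (delta_mx 0 i) v = v 0 i.
Proof.
rewrite /dot (bigD1 i) //= big1 ?addr0; first by rewrite mxE !eqxx mul1r.
by move=> j /negbTE ji; rewrite mxE ji andbF mul0r.
Qed.

Lemma sqnormE m : sqnorm m = dot m m.
Proof. by apply: eq_bigr => i _; rewrite expr2. Qed.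

Lemma sqnormD (z v : V) : sqnorm (z + v) = sqnorm z + 2 * dot z v + sqnorm v.
Proof. by rewrite !sqnormE dotDl !dotDr (dotC v z); ring. Qed.

Lemma sqnormZ c (z : V) : sqnorm (c *: z) = c ^+ 2 * sqnorm z.
Proof. by rewrite !sqnormE dotZl dotZr mulrA expr2. Qed.

Lemma dot0r m : dot m 0 = 0.
Proof. by rewrite /dot big1 // => i _; rewrite mxE mulr0. Qed.

Lemma sum_char_dot (w : V) : \sum_m chi (dot m w) = (w == 0)%:R * (q ^ d)%:R.
Proof.
have [->|w_neq0] := eqVneq w 0.
  under eq_bigr do rewrite dot0r chi0.
  by rewrite sumr_const card_mx mul1n mul1r.
have [i wi] : exists i, w 0 i != 0.
  apply/existsP; rewrite -negb_forall; apply: contra w_neq0 => /forallP w0.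
  by apply/eqP/rowP => i; rewrite mxE; apply/eqP/w0.
rewrite mul0r; pose e : V := (t0 / w 0 i) *: delta_mx 0 i.
apply: (@shifted_char_sum _ (fun m => dot m w) (+%R^~ e)); first exact: addIr.
by move=> m /=; rewrite dotDl dotZl dot_delta mulfVK.
Qed.

Lemma char_orthV (x y : V) :
  \sum_m chi (dot m x) * (chi (dot m y))^* = (x == y)%:R * (q ^ d)%:R.
Proof. by under eq_bigr do rewrite charB -dotBr; rewrite sum_char_dot subr_eq0. Qed.

Definition hat (S : {set V}) (m : V) : algC := \sum_(x in S) chi (dot m x).

Lemma hat_plancherel (S : {set V}) :
  \sum_m `|hat S m| ^+ 2 = (#|S| * q ^ d)%:R.
Proof.
have hatE m : hat S m = transform (fun m x => chi (dot m x)) (fun x => (x \in S)%:R) m.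
  rewrite /hat /transform big_mkcond; apply: eq_bigr => x _.
  by case: (x \in S); rewrite ?mulr1 ?mulr0.
under eq_bigr do rewrite hatE.
rewrite (plancherel char_orthV) natrM [RHS]mulrC; congr (_ * _).
rewrite -sum1_card natr_sum [RHS]big_mkcond; apply: eq_bigr => x _.
by case: (x \in S); rewrite ?normr1 ?normr0 ?expr1n ?expr0n.
Qed.

Hypothesis two_neq0 : (2 : K) != 0.

Definition gauss_sum (s : K) : algC := \sum_(z : V) chi (s * sqnorm z).

(* |G(s)|^2 = q^d for s != 0: after the shift z |-> z + v, the sum over z
   is a character sum that vanishes unless v = 0. *)
Lemma gauss_sum_norm s : s != 0 -> `|gauss_sum s| ^+ 2 = (q ^ d)%:R.
Proof.
move=> s_neq0; rewrite normCK /gauss_sum rmorph_sum mulr_sumr.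
have shift z' v : chi (s * sqnorm (v + z')) * (chi (s * sqnorm z'))^* =
    chi (s * sqnorm v) * chi (dot z' ((2 * s) *: v)).
  by rewrite charB -chiD sqnormD dotZr (dotC v z'); congr chi; ring.
under eq_bigr => z' _ do rewrite mulr_suml (reindex_inj (addIr z')) /=.
under eq_bigr => z' _ do under eq_bigr => v _ do rewrite shift.
rewrite exchange_big /=.
under eq_bigr => v _ do rewrite -mulr_sumr sum_char_dot scaler_eq0 mulf_eq0.
rewrite (negbTE two_neq0) (negbTE s_neq0) /= (bigD1 0) //= big1 ?addr0.
  by rewrite eqxx sqnormE dot0r mulr0 chi0 !mul1r.
by move=> v /negbTE ->; rewrite mul0r mulr0.
Qed.

(* The Gaussian chi(s ||z||) has transform chi(-||m||/(4s)) G(s). *)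
Definition gauss_dual (s : K) : K := - (4 * s)^-1.

Lemma four_neq0 : (4 : K) != 0.
Proof. by rewrite (_ : 4 = 2 * 2 :> K) ?mulf_neq0 // -natrM. Qed.

Lemma gauss_dual_inj : injective gauss_dual.
Proof. by move=> a b /oppr_inj /invr_inj /(mulfI four_neq0). Qed.

(* Fourier transform of the Gaussian z |-> chi (s ||z||), by completing the square. *)
Lemma gauss_transform s m : s != 0 ->
  \sum_z chi (s * sqnorm z) * (chi (dot m z))^* =
  chi (gauss_dual s * sqnorm m) * gauss_sum s.
Proof.
move=> s_neq0.
rewrite (reindex_inj (addIr ((2 * s)^-1 *: m))) /= /gauss_sum mulr_sumr.
apply: eq_bigr => z _; rewrite charB -chiD; congr chi.
rewrite sqnormD sqnormZ dotDr !dotZr (dotC m z) !sqnormE /gauss_dual.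
by field; rewrite s_neq0 four_neq0 two_neq0.
Qed.

Lemma gauss_expansion s w : s != 0 ->
  (q ^ d)%:R * chi (s * sqnorm w) =
  gauss_sum s * \sum_m chi (gauss_dual s * sqnorm m) * chi (dot m w).
Proof.
move=> s_neq0; rewrite -(inversion char_orthV (fun z => chi (s * sqnorm z))).
rewrite mulr_sumr; apply: eq_bigr => m _.
by rewrite gauss_transform // -mulrA mulrCA.
Qed.

Lemma sum_over_spheres (h : V -> algC) :
  \sum_k \sum_(m | sqnorm m == k) h m = \sum_m h m.
Proof. by rewrite [RHS](partition_big (@sqnorm K d) predT). Qed.

Lemma sum_by_sqnorm (g : K -> algC) (h : V -> algC) :
  \sum_k g k * \sum_(m | sqnorm m == k) h m = \sum_m g (sqnorm m) * h m.
Proof.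
rewrite -sum_over_spheres; apply: eq_bigr => k _.
by rewrite mulr_sumr; apply: eq_bigr => m /eqP ->.
Qed.

Section DistanceEnergy.
Variables E F : {set V}.

Definition sphere_corr (k : K) : algC :=
  \sum_(m | sqnorm m == k) hat E m * (hat F m)^*.

Local Notation charK := (fun s t : K => chi (s * t)).
Local Notation W := (transform charK (fun t => (dist_count E F t)%:R)).

Lemma W_pairs s : W s = \sum_(x in E) \sum_(y in F) chi (s * sqnorm (x - y)).
Proof.
rewrite pair_big_dep /= (partition_big (fun p => sqnorm (p.1 - p.2)) predT) //=.
apply: eq_bigr => t _; rewrite /dist_count -sum1_card natr_sum mulr_sumr.
rewrite big_mkcond [RHS]big_mkcond; apply: eq_bigr => -[x y] _ /=.
by rewrite !inE /=; case: ifP => // /andP[_ /eqP ->]; rewrite mulr1.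
Qed.

Lemma W0 : W 0 = (#|E| * #|F|)%:R.
Proof.
rewrite -sum_dist_count natr_sum; apply: eq_bigr => t _.
by rewrite mul0r chi0 mul1r.
Qed.

(* For s != 0, expanding z |-> chi (s ||z||) in characters expresses W(s)
   through the transform of the sphere correlations at gauss_dual s. *)
Lemma W_fourier s : s != 0 ->
  (q ^ d)%:R * W s = gauss_sum s * transform charK sphere_corr (gauss_dual s).
Proof.
move=> s_neq0.
transitivity (gauss_sum s * \sum_(x in E) \sum_(y in F)
    \sum_m chi (gauss_dual s * sqnorm m) * chi (dot m (x - y))).
  rewrite W_pairs !mulr_sumr; apply: eq_bigr => x _.
  by rewrite !mulr_sumr; apply: eq_bigr => y _; rewrite gauss_expansion.
congr (_ * _); rewrite /transform sum_by_sqnorm /sphere_corr.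
have corr m : hat E m * (hat F m)^* =
    \sum_(x in E) \sum_(y in F) chi (dot m (x - y)).
  rewrite /hat rmorph_sum mulr_suml; apply: eq_bigr => x _.
  by rewrite mulr_sumr; apply: eq_bigr => y _; rewrite dotBr -charB.
under [RHS]eq_bigr => m _ do rewrite corr mulr_sumr.
rewrite [RHS]exchange_big; apply: eq_bigr => x _ /=.
under [RHS]eq_bigr => m _ do rewrite mulr_sumr.
by rewrite [RHS]exchange_big.
Qed.

Lemma W_nonzero s : s != 0 ->
  (q ^ d)%:R * `|W s| ^+ 2 = `|transform charK sphere_corr (gauss_dual s)| ^+ 2.
Proof.
move=> s_neq0.
have := congr1 (fun z => `|z| ^+ 2) (W_fourier s_neq0).
rewrite /= !normrM !exprMn gauss_sum_norm // normr_nat => sq.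
by apply: (mulfI q_pow_neq0); rewrite mulrA -expr2 sq.
Qed.

(* Plancherel on K, after reindexing s |-> gauss_dual s. *)
Lemma sum_W_nonzero :
  (q ^ d)%:R * \sum_(s | s != 0) `|W s| ^+ 2 <= q%:R * \sum_k `|sphere_corr k| ^+ 2.
Proof.
rewrite mulr_sumr; under eq_bigr => s s_neq0 do rewrite W_nonzero //.
rewrite -(plancherel char_orthK) [X in _ <= X](reindex_inj gauss_dual_inj).
by rewrite [X in _ <= X](bigD1 0) //= lerDr exprn_ge0 ?normr_ge0.
Qed.

(* Cauchy-Schwarz on each sphere, then Plancherel for F. *)
Lemma sphere_corr_bound B :
  (forall k, q%:R * \sum_(m | sqnorm m == k) `|hat E m| ^+ 2 <= B) ->
  q%:R * \sum_k `|sphere_corr k| ^+ 2 <= B * (#|F| * q ^ d)%:R.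
Proof.
move=> hB.
have each k : q%:R * `|sphere_corr k| ^+ 2 <=
    B * \sum_(m | sqnorm m == k) `|hat F m| ^+ 2.
  have tri : `|sphere_corr k| <= \sum_(m | sqnorm m == k) `|hat E m| * `|hat F m|.
    apply: le_trans (ler_norm_sum _ _ _) _.
    by apply: ler_sum => m _; rewrite normrM norm_conjC.
  have F_ge0 : 0 <= \sum_(m | sqnorm m == k) `|hat F m| ^+ 2.
    by apply: sumr_ge0 => m _; exact: exprn_ge0.
  apply: le_trans (ler_wpM2r F_ge0 (hB k)).
  rewrite -mulrA ler_wpM2l ?ler0n //.
  have := @cauchy_schwarz algC _ (fun m => sqnorm m == k) (fun m => `|hat E m|)
    (fun m => `|hat F m|) (fun m => normr_real _) (fun m => normr_real _).
  by apply: le_trans; rewrite lerXn2r ?nnegrE // sumr_ge0 // => m _; rewrite mulr_ge0.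
rewrite mulr_sumr; apply: le_trans (ler_sum _ (fun k _ => each k)) _.
by rewrite -mulr_sumr sum_over_spheres hat_plancherel.
Qed.

Lemma energy_bound B :
  (forall k, q%:R * \sum_(m | sqnorm m == k) `|hat E m| ^+ 2 <= B) ->
  q%:R * \sum_t (dist_count E F t)%:R ^+ 2 <= (#|E| * #|F|)%:R ^+ 2 + B * #|F|%:R.
Proof.
move=> hB.
have parseval : \sum_s `|W s| ^+ 2 = q%:R * \sum_t (dist_count E F t)%:R ^+ 2.
  by rewrite (plancherel char_orthK); under eq_bigr do rewrite normr_nat.
rewrite -parseval (bigD1 0) //= W0 normr_nat lerD2l.
have qd_gt0 : 0 < (q ^ d)%:R :> algC by rewrite ltr0n expn_gt0 q_gt0.
rewrite -(ler_pM2l qd_gt0).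
have -> : (q ^ d)%:R * (B * #|F|%:R) = B * (#|F| * q ^ d)%:R by rewrite natrM; ring.
exact: le_trans sum_W_nonzero (sphere_corr_bound hB).
Qed.

End DistanceEnergy.

Section ProductSet.
Variables (i0 : 'I_d) (A : {set K}).
Local Notation e0 := (delta_mx 0 i0 : V).

(* The factor of A^d transverse to the i0-th axis: A in every coordinate
   except the i0-th one, which is 0. *)
Definition slice : {set V} :=
  [set x : V | (x 0 i0 == 0) && [forall i, (i != i0) ==> (x 0 i \in A)]].

Definition slice_shift (p : V * K) : V := p.1 + p.2 *: e0.

Lemma slice_shiftE (x : V) t i :
  (x + t *: e0) 0 i = x 0 i + (if i == i0 then t else 0).
Proof. by rewrite !mxE eqxx /=; case: (i == i0); rewrite ?mulr1 ?mulr0. Qed.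

Lemma prodset_slice : prodset d A = slice_shift @: setX slice A.
Proof.
apply/setP => x; apply/idP/imsetP.
- rewrite inE => /forallP xA.
  exists (x + (- x 0 i0) *: e0, x 0 i0); last first.
    by rewrite /slice_shift /= -addrA -scalerDl addNr scale0r addr0.
  rewrite inE /= !inE slice_shiftE eqxx addrN eqxx /= xA andbT.
  apply/forallP => i; apply/implyP => /negbTE i_neq_i0.
  by rewrite slice_shiftE i_neq_i0 addr0.
- move=> [[y t]] /setXP [y_slice tA] ->.
  rewrite inE; apply/forallP => i; rewrite /slice_shift /= slice_shiftE.
  move: y_slice; rewrite inE => /andP [/eqP y0 /forallP yA].
  have [->|i_neq_i0] := eqVneq i i0; first by rewrite y0 add0r.
  by rewrite addr0; move/implyP: (yA i); apply.
Qed.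

Lemma slice_shift_inj : {in setX slice A &, injective slice_shift}.
Proof.
move=> [x t] [x' t'] /setXP [x_slice _] /setXP [x'_slice _] /= eq_shift.
move: x_slice x'_slice; rewrite !inE => /andP [/eqP x0 _] /andP [/eqP x'0 _].
have t_eq : t = t'.
  have := congr1 (fun v : V => v 0 i0) eq_shift.
  by rewrite /slice_shift /= !slice_shiftE eqxx x0 x'0 !add0r.
by move: eq_shift; rewrite /slice_shift /= t_eq => /addIr ->.
Qed.

Lemma card_prodset_slice : #|prodset d A| = (#|slice| * #|A|)%N.
Proof.
by rewrite prodset_slice card_in_imset ?cardsX //; exact: slice_shift_inj.
Qed.

Lemma hat_prodset m :
  hat (prodset d A) m = hat slice m * \sum_(t in A) chi (m 0 i0 * t).
Proof.
rewrite /hat prodset_slice big_imset /=; last exact: slice_shift_inj.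
rewrite mulr_suml; under [RHS]eq_bigr do rewrite mulr_sumr.
rewrite [RHS]pair_big_dep; apply: eq_big => [[x t]|[x t] _]; first by rewrite in_setX.
by rewrite /slice_shift /= dotDr dotZr (dotC m e0) dot_delta chiD (mulrC t).
Qed.

Lemma hat_slice_shift m c : hat slice (m + c *: e0) = hat slice m.
Proof.
apply: eq_bigr => x; rewrite inE => /andP [/eqP x0 _].
by rewrite dotDl dotZl dot_delta x0 mulr0 addr0.
Qed.

(* A line in direction e0 meets a sphere in at most two points, since
   ||m + c e0|| is a monic quadratic polynomial in c. *)
Lemma line_sphere_meet (m : V) k :
  (#|[set c : K | sqnorm (m + c *: e0) == k]| <= 2)%N.
Proof.
have quad c : sqnorm (m + c *: e0) = sqnorm m + c * (2 * m 0 i0) + c ^+ 2.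
  rewrite sqnormD sqnormZ dotZr (dotC m e0) dot_delta (sqnormE e0) dot_delta.
  by rewrite mxE !eqxx /=; ring.
case: (set_0Vmem [set c : K | sqnorm (m + c *: e0) == k]) => [->|[c0]].
  by rewrite cards0.
rewrite inE => /eqP c0_sphere.
apply: (@leq_trans #|[set c0; - c0 - 2 * m 0 i0]|); last first.
  by rewrite cards2; case: (_ != _).
apply: subset_leq_card; apply/subsetP => c; rewrite !inE => /eqP c_sphere.
have : (c - c0) * (c + c0 + 2 * m 0 i0) = 0.
  have : sqnorm (m + c *: e0) - sqnorm (m + c0 *: e0) = 0.
    by rewrite c_sphere c0_sphere subrr.
  by rewrite !quad => <-; ring.
move/eqP; rewrite mulf_eq0 subr_eq0 => /orP [-> //|other_root].
by apply/orP; right; rewrite -subr_eq0 -(eqP other_root); apply/eqP; ring.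
Qed.

(* Averaging a nonnegative e0-invariant function over the q translates of
   a sphere: each line in direction e0 meets the sphere at most twice. *)
Lemma sphere_average (G : V -> algC) k :
  (forall m, 0 <= G m) -> (forall m c, G (m + c *: e0) = G m) ->
  q%:R * \sum_(m | sqnorm m == k) G m <= 2%:R * \sum_m G m.
Proof.
move=> G_ge0 G_inv.
have translate c : \sum_(m | sqnorm m == k) G m =
    \sum_m G m * (sqnorm (m + c *: e0) == k)%:R.
  rewrite big_mkcond (reindex_inj (addIr (c *: e0))) /=; apply: eq_bigr => m _.
  by rewrite G_inv; case: (_ == _); rewrite ?mulr1 ?mulr0.
have -> : q%:R * \sum_(m | sqnorm m == k) G m =
    \sum_(c : K) \sum_(m | sqnorm m == k) G m by rewrite sumr_const mulr_natl.
rewrite (eq_bigr _ (fun c _ => translate c)).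
rewrite exchange_big /= mulr_sumr; apply: ler_sum => m _.
rewrite -mulr_sumr mulrC ler_wpM2r // -natr_sum ler_nat.
apply: leq_trans (line_sphere_meet m k).
by rewrite -sum1_card [X in (_ <= X)%N]big_mkcond; apply: leq_sum => c _; rewrite inE.
Qed.

Lemma prodset_sphere_bound k :
  q%:R * \sum_(m | sqnorm m == k) `|hat (prodset d A) m| ^+ 2 <=
  (2 * #|A| * #|prodset d A| * q ^ d)%:R.
Proof.
have factorA m : `|\sum_(t in A) chi (m 0 i0 * t)| <= #|A|%:R.
  apply: le_trans (ler_norm_sum _ _ _) _.
  by under eq_bigr do rewrite norm_char; rewrite sumr_const.
apply: (@le_trans _ _ (q%:R * \sum_(m | sqnorm m == k)
                        `|hat slice m| ^+ 2 * #|A|%:R ^+ 2)).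
  rewrite ler_wpM2l ?ler0n //; apply: ler_sum => m _.
  rewrite hat_prodset normrM exprMn ler_wpM2l ?exprn_ge0 ?normr_ge0 //.
  by rewrite lerXn2r ?nnegrE ?normr_ge0 ?ler0n ?factorA.
rewrite -mulr_suml mulrA.
apply: le_trans (ler_wpM2r (exprn_ge0 _ (ler0n _ _)) (sphere_average _ _ _)) _.
- by move=> m; exact: exprn_ge0.
- by move=> m c; rewrite hat_slice_shift.
rewrite hat_plancherel card_prodset_slice -!natrX -!natrM ler_nat.
by apply: eq_leq; ring.
Qed.

End ProductSet.

Lemma prodset_energy (i0 : 'I_d) (A : {set K}) (F : {set V}) :
  (q * \sum_t dist_count (prodset d A) F t ^ 2 <=
   (#|prodset d A| * #|F|) ^ 2 + 2 * #|A| * q ^ d * (#|prodset d A| * #|F|))%N.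
Proof.
rewrite -(ler_nat algC) natrM natrD !natrX natr_sum.
under eq_bigr do rewrite natrX.
apply: le_trans (energy_bound F (prodset_sphere_bound i0 A)) _.
by rewrite !natrM le_eqVlt; apply/predU1P; left; ring.
Qed.

End AdditiveCharacter.

Lemma card_prodset (K : finFieldType) (d : nat) (A : {set K}) :
  #|prodset d A| = (#|A| ^ d)%N.
Proof.
have -> : prodset d A = [set \row_i f i | f : {ffun 'I_d -> K} in ffun_on A].
  apply/setP => x; apply/idP/imsetP.
  - rewrite inE => /forallP xA; exists [ffun i => x 0 i].
      by apply/ffun_onP => i; rewrite ffunE.
    by apply/rowP => i; rewrite !mxE ffunE.
  - move=> [f /ffun_onP fA ->]; rewrite inE; apply/forallP => i.
    by rewrite mxE.
rewrite card_imset ?card_ffun_on ?card_ord // => f f' eq_row.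
by apply/ffunP => i; have := congr1 (fun v : 'rV_d => v 0 i) eq_row; rewrite !mxE.
Qed.

(* Combining the two bounds on N = sum_t nu(t)^2 with X = |E||F|:
   q X^2 <= q D N <= D X (X + Y), hence q X <= D (X + Y). *)
Lemma energy_arith (q X Y D N : nat) :
  (0 < X)%N -> (X ^ 2 <= D * N)%N -> (q * N <= X ^ 2 + Y * X)%N ->
  (q * X <= D * (X + Y))%N.
Proof.
move=> X_gt0 lower upper; rewrite -(leq_pmul2r X_gt0) -!mulnA mulnn.
apply: (@leq_trans (D * (q * N))); first by rewrite mulnCA leq_mul2l lower orbT.
by rewrite leq_mul2l mulnDl mulnn upper orbT.
Qed.

(* The final case distinction, with X = n^d f = |E||F| and Y = 2 n q^d:
   if Y <= X then q X <= 2 D X, i.e. q/2 <= D; otherwise q X <= 2 D Y,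
   i.e. n^(d-1) f <= 4 D q^(d-1). *)
Lemma distance_bound_arith (q n f D d : nat) :
  (0 < q)%N -> (0 < n)%N -> (0 < f)%N -> (0 < d)%N ->
  (q * (n ^ d * f) <= D * (n ^ d * f + 2 * n * q ^ d))%N ->
  Num.min ((q%:R : algC) / 2)
    ((d.-root ((n ^ d)%:R : algC)) ^+ d.-1 * f%:R / (4 * q%:R ^+ d.-1))
  <= D%:R.
Proof.
move=> q_gt0 n_gt0 f_gt0 d_gt0 key.
rewrite natrX exprCK ?ler0n // comparable_ge_min; last first.
  by apply: real_comparable; apply: ger0_real;
     rewrite ?divr_ge0 ?mulr_ge0 ?exprn_ge0 ?ler0n.
have X_gt0 : (0 < n ^ d * f)%N by rewrite muln_gt0 expn_gt0 n_gt0 f_gt0.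
have [Y_le_X|X_lt_Y] := leqP (2 * n * q ^ d) (n ^ d * f).
  apply/orP; left; rewrite ler_pdivrMr ?ltr0n // -natrM ler_nat.
  rewrite -(leq_pmul2r X_gt0); apply: leq_trans key _.
  by rewrite -(mulnA D) leq_mul2l (mulSn 1 (n ^ d * f)) mul1n leq_add2l Y_le_X orbT.
apply/orP; right.
have {}key : (q * (n ^ d * f) <= D * (2 * (2 * n * q ^ d)))%N.
  apply: leq_trans key _; rewrite leq_mul2l (mulSn 1 (2 * n * q ^ d)) mul1n.
  by rewrite leq_add2r ltnW ?orbT.
rewrite ler_pdivrMr ?mulr_gt0 ?exprn_gt0 ?ltr0n // -!natrX -!natrM ler_nat.
rewrite -(@leq_pmul2l (q * n)) ?muln_gt0 ?q_gt0 ?n_gt0 //.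
move: key; rewrite -(prednK d_gt0) !expnS.
set a := (n ^ d.-1)%N; set b := (q ^ d.-1)%N.
have -> : (q * n * (a * f) = q * (n * a * f))%N by ring.
by have -> : (q * n * (D * (4 * b)) = D * (2 * (2 * n * (q * b))))%N by ring.
Qed.

Theorem mainTheorem4 (K : finFieldType) (hK : (2 \notin [pchar K])%N)
  (d : nat) (hd : (2 <= d)%N) (A : {set K}) (hA : A != set0)
  (F : {set 'rV[K]_d}) (hF : F != set0) :
  let q := #|K| in
  let E := prodset d A in
  Num.min ((q%:R : algC) / 2)
    ((d.-root (#|E|%:R : algC)) ^+ (d.-1) * #|F|%:R / (4 * q%:R ^+ (d.-1)))
  <= #|distset E F|%:R.
Proof.
cbv zeta; set E := prodset d A.
have [chi [chiD chiN chi0 [t0 chi_t0]]] := nontrivial_additive_character K.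
have two_neq0 : (2 : K) != 0 by apply: contra hK => two0; rewrite inE /= two0.
have d_gt0 : (0 < d)%N by apply: leq_trans hd.
have X_gt0 : (0 < #|E| * #|F|)%N.
  by rewrite card_prodset muln_gt0 expn_gt0 !card_gt0 hA hF.
have := energy_arith X_gt0 (dist_count_lower E F)
  (prodset_energy chiD chiN chi0 chi_t0 two_neq0 (Ordinal d_gt0) A F).
rewrite card_prodset => key.
by apply: distance_bound_arith; rewrite ?card_gt0 ?q_gt0.
Qed.
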